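(* Let $\langle U_\alpha\rangle_{\alpha<\omega}$ be a smooth splitting sequence for a disjunctive program $P$. Then $P$ is consistent if and only if $bot_{U_\alpha}(P)$ is consistent for every $\alpha<\omega$.
   Context: A disjunctive program is a set of rules $A_1\vee\dots\vee A_m\leftarrow L_1,\dots,L_n$ ($m>0$, $n\ge0$), $A_j$ atoms, $L_i$ atoms or negated atoms $\mathtt{not}\,A$, possibly with function symbols; $head(r)=\{A_1,\dots,A_m\}$. $\mathsf{Ground}(P)$ is its ground instantiation, $\mathit{atom}(r)$ the set of atoms of a ground rule $r$, $\mathit{atom}(\mathsf{Ground}(P))$ the set of ground atoms occurring in $\mathsf{Ground}(P)$. For a set $M$ of ground atoms and a set $Q$ of ground rules, $Q^M$ is obtained from $Q$ by deleting rules having some $\mathtt{not}\,B$ in the body with $B\in M$ and deleting negative literals from the remaining rules; $M$ is a stable model of $Q$ iff it is a minimal Herbrand model of $Q^M$ (for $P$ take $Q=\mathsf{Ground}(P)$). A program is consistent iff it has a stable model. A splitting set of $P$ is a set $U$ of ground atoms such that for all $r\in\mathsf{Ground}(P)$, $head(r)\cap U\neq\emptyset$ implies $\mathit{atom}(r)\subseteq U$; $bot_U(P)=\{r\in\mathsf{Ground}(P)\mid head(r)\cap U\ne\emptyset\}$. A splitting sequence $\langle U_\alpha\rangle_{\alpha<\mu}$ for $P$ is a sequence of splitting sets of $P$ that is monotone, continuous (at limit ordinals it is the union of the previous sets) and has union $\mathit{atom}(\mathsf{Ground}(P))$. It is smooth iff $U_0$ is finite and $U_{\alpha+1}\setminus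 U_\alpha$ is finite for all $\alpha+1<\mu$. *)

From Stdlib Require Import List.
Import ListNotations.
Set Implicit Arguments.

Section Programs.
Variables (Fsym : Type) (ar : Fsym -> nat) (Psym : Type).

Inductive term : Type :=
| Var : nat -> term
| Fn : Fsym -> list term -> term.

Inductive gterm : Type :=
| GFn : Fsym -> list gterm -> gterm.

(* well-formed ground terms = elements of the Herbrand universe *)
Fixpoint gwf (t : gterm) : Prop :=
  match t with
  | GFn f l => length l = ar f /\ fold_right (fun u acc => gwf u /\ acc) True l
  end.

Fixpoint tvars (t : term) : list nat :=
  match t with
  | Var v => [v]
  | Fn _ l => flat_map tvars l
  end.

Fixpoint tsubst (s : nat -> gterm) (t : term) : gterm :=
  match t with
  | Var v => s v
  | Fn f l => GFn f (map (tsubst s) l)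
  end.

Record atom := mkAtom { apred : Psym; aargs : list term }.
Record gatom := mkGAtom { gpred : Psym; gargs : list gterm }.

Inductive lit (A : Type) : Type :=
| Pos : A -> lit A
| Neg : A -> lit A.
Arguments Pos {A}. Arguments Neg {A}.

(* rule  A_1 v ... v A_m <- L_1, ..., L_n   (m > 0) *)
Record rule := mkRule { rhead : list atom; rbody : list (lit atom); rhead_ne : rhead <> [] }.
Record grule := mkGRule { ghead : list gatom; gbody : list (lit gatom) }.

Definition program := rule -> Prop.
Definition gprogram := grule -> Prop.
Definition gset := gatom -> Prop.

Definition lit_atom {A} (l : lit A) : A := match l with Pos a => a | Neg a => a end.
Definition lit_map {A B} (f : A -> B) (l : lit A) : lit B :=
  match l with Pos a => Pos (f a) | Neg a => Neg (f a) end.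

Definition avars (a : atom) : list nat := flat_map tvars (aargs a).
Definition rvars (r : rule) : list nat :=
  flat_map avars (rhead r) ++ flat_map (fun l => avars (lit_atom l)) (rbody r).

Definition asubst (s : nat -> gterm) (a : atom) : gatom :=
  mkGAtom (apred a) (map (tsubst s) (aargs a)).

Definition rsubst (s : nat -> gterm) (r : rule) : grule :=
  mkGRule (map (asubst s) (rhead r)) (map (lit_map (asubst s)) (rbody r)).

Definition Ground (P : program) : gprogram :=
  fun g => exists r s, P r /\ (forall v, In v (rvars r) -> gwf (s v)) /\ g = rsubst s r.

Definition head_of (r : grule) : gset := fun a => In a (ghead r).
Definition atom_of_rule (r : grule) : gset :=
  fun a => In a (ghead r) \/ exists l, In l (gbody r) /\ lit_atom l = a.
Definition atoms (Q : gprogram) : gset := fun a => exists r, Q r /\ atom_of_rule r a.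

Definition reduct (Q : gprogram) (M : gset) : gprogram :=
  fun r' => exists r, Q r /\ (forall B, In (Neg B) (gbody r) -> ~ M B) /\
    r' = mkGRule (ghead r) (filter (fun l => match l with Pos _ => true | Neg _ => false end) (gbody r)).

Definition lit_true (M : gset) (l : lit gatom) : Prop :=
  match l with Pos a => M a | Neg a => ~ M a end.

Definition is_model (Q : gprogram) (M : gset) : Prop :=
  forall r, Q r -> (forall l, In l (gbody r) -> lit_true M l) -> exists a, In a (ghead r) /\ M a.

Definition subset (A B : gset) : Prop := forall a, A a -> B a.

Definition minimal_model (Q : gprogram) (M : gset) : Prop :=
  is_model Q M /\ forall N, subset N M -> is_model Q N -> subset M N.

Definition stable_model (Q : gprogram) (M : gset) : Prop := minimal_model (reduct Q M) M.

Definition consistent_ground (Q : gprogram) : Prop := exists M, stable_model Q M.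
Definition consistent (P : program) : Prop := consistent_ground (Ground P).

Definition splitting_set (P : program) (U : gset) : Prop :=
  forall r, Ground P r -> (exists a, head_of r a /\ U a) -> subset (atom_of_rule r) U.

Definition bot (U : gset) (P : program) : gprogram :=
  fun r => Ground P r /\ exists a, head_of r a /\ U a.

(* splitting sequence of length omega: <U_n>_{n < omega}.  Continuity is
   vacuous since there are no limit ordinals below omega. *)
Definition splitting_sequence_omega (P : program) (U : nat -> gset) : Prop :=
  (forall n, splitting_set P (U n)) /\
  (forall m n, m <= n -> subset (U m) (U n)) /\
  (forall a, (exists n, U n a) <-> atoms (Ground P) a).

Definition finite_set (S : gset) : Prop := exists l, forall a, S a -> In a l.

Definition smooth_omega (U : nat -> gset) : Prop :=
  finite_set (U 0) /\ forall n, finite_set (fun a => U (S n) a /\ ~ U n a).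

End Programs.

Arguments Pos {A}. Arguments Neg {A}.

(* Each bottom bot_{U_n}(P) is itself split by every U_k with k <= n, and
   restricting a stable model to a splitting set gives a stable model of the
   bottom.  Conversely, pick a stable model M_m of every bottom.  As U_n is
   finite, the restrictions of the M_m to U_n take finitely many values, so
   a Koenig-style argument yields sets X_n, each the restriction of infinitely
   many M_m (hence a stable model of bot_{U_n}(P)), with X_{n+1} restricted
   to U_n equal to X_n.  The union of the X_n restricts to X_n on every U_n,
   and a set whose restrictions to a covering family of splitting sets are
   stable models of the bottoms is a stable model of P. *)
From Stdlib Require Import List Lia Classical ClassicalEpsilon
  FunctionalExtensionality PropExtensionality.
Import ListNotations.
Set Implicit Arguments.

Section Restrictions.
Variable A : Type.

Definition restrict (M U : A -> Prop) : A -> Prop := fun a => M a /\ U a.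

Definition inf_often (Q : nat -> Prop) : Prop := forall k, exists m, k <= m /\ Q m.

Lemma set_ext (M N : A -> Prop) : (forall a, M a <-> N a) -> M = N.
Proof.
  intros H. apply functional_extensionality; intros a.
  apply propositional_extensionality, H.
Qed.

Lemma restrict_id (M U : A -> Prop) : (forall a, M a -> U a) -> restrict M U = M.
Proof. intros H. apply set_ext; intros a. unfold restrict; firstorder. Qed.

Lemma restrict_restrict (M U V : A -> Prop) :
  (forall a, U a -> V a) -> restrict (restrict M V) U = restrict M U.
Proof. intros H. apply set_ext; intros a. unfold restrict; firstorder. Qed.

Lemma finite_subsets (l : list A) :
  exists L : list (A -> Prop), forall S, (forall x, S x -> In x l) -> In S L.
Proof.
  induction l as [|a l [L HL]].
  - exists [fun _ => False]; intros S HS. left.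
    apply set_ext; intros x; split; [intros []|intros Sx; destruct (HS x Sx)].
  - exists (L ++ map (fun S x => x = a \/ S x) L); intros S HS.
    assert (HSa : In (fun x => S x /\ x <> a) L).
    { apply HL; intros x [Sx ne]. destruct (HS x Sx); [congruence|assumption]. }
    apply in_or_app. destruct (classic (S a)) as [Sa|nSa].
    + right. apply in_map_iff. eexists; split; [|exact HSa].
      apply set_ext; intros x. destruct (classic (x = a)); subst; intuition.
    + left. replace S with (fun x => S x /\ x <> a); [exact HSa|].
      apply set_ext; intros x. split; [tauto|]. intros Sx; split; congruence.
Qed.

Lemma inf_often_pigeonhole {B : Type} (C : list B) (Q : nat -> Prop) (f : nat -> B) :
  inf_often Q -> (forall m, Q m -> In (f m) C) ->
  exists c, inf_often (fun m => Q m /\ f m = c).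
Proof.
  revert Q. induction C as [|c C IH]; intros Q HQ Hf.
  - destruct (HQ 0) as [m [_ Qm]]. destruct (Hf m Qm).
  - destruct (classic (inf_often (fun m => Q m /\ f m = c))) as [Hc|Hc]; [eauto|].
    apply not_all_ex_not in Hc as [k Hk].
    destruct (IH (fun m => Q m /\ k <= m)) as [c' Hc'].
    + intros j. destruct (HQ (max j k)) as [m [Hm Qm]]. exists m; repeat split; auto; lia.
    + intros m [Qm Hkm]. destruct (Hf m Qm) as [Hfm|]; [|assumption].
      exfalso. apply Hk. exists m; auto.
    + exists c'; intros j. destruct (Hc' j) as [m [? [[? _] ?]]]; eauto.
Qed.

Lemma dependent_choice (T : Type) (P : nat -> T -> Prop) (R : nat -> T -> T -> Prop) :
  (exists x, P 0 x) -> (forall n x, P n x -> exists y, P (S n) y /\ R n x y) ->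
  exists f : nat -> T, forall n, P n (f n) /\ R n (f n) (f (S n)).
Proof.
  intros [x0 H0] Hstep.
  pose (next n (x : {x | P n x}) :=
    constructive_indefinite_description _ (Hstep n _ (proj2_sig x))).
  pose (chain := fix chain n : {x | P n x} :=
    match n return {x | P n x} with
    | 0 => exist _ x0 H0
    | S m => exist _ _ (proj1 (proj2_sig (next m (chain m))))
    end).
  exists (fun n => proj1_sig (chain n)); intros n.
  exact (conj (proj2_sig (chain n)) (proj2 (proj2_sig (next n (chain n))))).
Qed.

Section Koenig.
Variable U : nat -> A -> Prop.
Hypothesis U_finite : forall n, exists l, forall a, U n a -> In a l.
Hypothesis U_mono : forall m n, m <= n -> forall a, U m a -> U n a.

Lemma coherent_restrictions (M : nat -> A -> Prop) :
  exists X : nat -> A -> Prop, forall n,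
    inf_often (fun m => restrict (M m) (U n) = X n) /\ restrict (X (S n)) (U n) = X n.
Proof.
  assert (Hlevel : forall n, exists L, forall m, In (restrict (M m) (U n)) L).
  { intros n. destruct (U_finite n) as [l Hl]. destruct (finite_subsets l) as [L HL].
    exists L; intros m. apply HL; intros a [_ Ua]; auto. }
  apply dependent_choice with
    (P := fun n X => inf_often (fun m => restrict (M m) (U n) = X))
    (R := fun n X Y => restrict Y (U n) = X).
  - destruct (Hlevel 0) as [L HL].
    destruct (@inf_often_pigeonhole _ L (fun _ => True) (fun m => restrict (M m) (U 0)))
      as [X HX]; [intros k; eauto| auto |].
    exists X; intros k. destruct (HX k) as [m [? [_ ?]]]; eauto.
  - intros n X HX. destruct (Hlevel (S n)) as [L HL].
    destruct (@inf_often_pigeonhole _ L _ (fun m => restrict (M m) (U (S n))) HX)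
      as [Y HY]; [auto|].
    exists Y; split.
    + intros k. destruct (HY k) as [m [? [_ ?]]]; eauto.
    + destruct (HY 0) as [m [_ [<- <-]]].
      apply restrict_restrict, U_mono; lia.
Qed.

Lemma restrict_union (X : nat -> A -> Prop) :
  (forall n a, X n a -> U n a) -> (forall n, restrict (X (S n)) (U n) = X n) ->
  forall n, restrict (fun a => exists k, X k a) (U n) = X n.
Proof.
  intros XU Xcoh.
  assert (Hchain : forall n k, n <= k -> restrict (X k) (U n) = X n).
  { intros n k Hnk. induction Hnk as [|k Hnk IH]; [apply restrict_id, XU|].
    rewrite <- (restrict_restrict (X (S k)) _ _ (U_mono Hnk)), Xcoh. exact IH. }
  intros n. apply set_ext; intros a. split.
  - intros [[k Xka] Una]. destruct (Compare_dec.le_ge_dec k n) as [Hkn|Hnk].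
    + rewrite <- (Hchain k n Hkn) in Xka. apply Xka.
    + rewrite <- (Hchain n k Hnk). split; assumption.
  - intros Xna. split; [exists n|apply XU]; assumption.
Qed.

End Koenig.
End Restrictions.

Section Splitting.
Variables (F Ps : Type).

Definition positive_part (r : grule F Ps) : grule F Ps :=
  mkGRule (ghead r) (filter (fun l => match l with Pos _ => true | Neg _ => false end) (gbody r)).

Lemma in_positive_part (r : grule F Ps) l :
  In l (gbody (positive_part r)) -> exists b, l = Pos b /\ In (Pos b) (gbody r).
Proof. intros [Hl Hp]%filter_In. destruct l; [eauto|discriminate]. Qed.

Lemma is_model_reduct (Q : gprogram F Ps) (M N : gset F Ps) :
  is_model (reduct Q M) N <->
  forall r, Q r -> (forall B, In (Neg B) (gbody r) -> ~ M B) ->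
    (forall b, In (Pos b) (gbody r) -> N b) -> exists a, In a (ghead r) /\ N a.
Proof.
  split.
  - intros HN r Qr Hneg Hpos. apply (HN (positive_part r)); [exists r; auto|].
    intros l [b [-> Hb]]%in_positive_part. exact (Hpos b Hb).
  - intros HN r' [r [Qr [Hneg ->]]] Hbody. apply (HN r); [assumption..|].
    intros b Hb. apply (Hbody (Pos b)), filter_In; auto.
Qed.

Definition gbot (U : gset F Ps) (Q : gprogram F Ps) : gprogram F Ps :=
  fun r => Q r /\ exists a, head_of r a /\ U a.

Definition gsplitting (Q : gprogram F Ps) (U : gset F Ps) : Prop :=
  forall r, Q r -> (exists a, head_of r a /\ U a) -> subset (atom_of_rule r) U.

Lemma gsplitting_gbot (Q : gprogram F Ps) (U V : gset F Ps) :
  gsplitting Q U -> gsplitting (gbot V Q) U.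
Proof. intros HU r [Qr _]. exact (HU r Qr). Qed.

Lemma gbot_gbot (Q : gprogram F Ps) (U V : gset F Ps) :
  subset U V -> gbot U (gbot V Q) = gbot U Q.
Proof.
  intros UV. apply functional_extensionality; intros r.
  apply propositional_extensionality. unfold gbot, head_of. firstorder.
Qed.

Lemma body_atom_pos (r : grule F Ps) b : In (Pos b) (gbody r) -> atom_of_rule r b.
Proof. intros Hb. right. exists (Pos b); auto. Qed.

Lemma body_atom_neg (r : grule F Ps) b : In (Neg b) (gbody r) -> atom_of_rule r b.
Proof. intros Hb. right. exists (Neg b); auto. Qed.

Section Bottom.
Variables (Q : gprogram F Ps) (U M : gset F Ps).
Hypothesis U_splits : gsplitting Q U.

Lemma is_model_gbot :
  is_model (reduct Q M) M -> is_model (reduct (gbot U Q) (restrict M U)) (restrict M U).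
Proof.
  rewrite !is_model_reduct. intros HM r [Qr Hhead] Hneg Hpos.
  pose proof (U_splits Qr Hhead) as HrU.
  destruct (HM r Qr) as [a [Ha Ma]].
  - intros B HB MB. apply (Hneg B HB). split; [|apply HrU, body_atom_neg]; assumption.
  - intros b Hb. apply Hpos, Hb.
  - exists a. repeat split; [assumption..|]. apply HrU; left; assumption.
Qed.

(* A model N of the bottom is extended by the atoms of M outside U; rules of Q
   whose head avoids U are then satisfied by those atoms. *)
Lemma minimal_gbot : stable_model Q M ->
  forall N, subset N (restrict M U) -> is_model (reduct (gbot U Q) (restrict M U)) N ->
  subset (restrict M U) N.
Proof.
  intros [HM Hmin] N HNM HN.
  set (N' := fun a => N a \/ (M a /\ ~ U a)).
  assert (HN'M : subset N' M) by (intros a [Na|[Ma _]]; [apply HNM|]; assumption).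
  assert (HN' : is_model (reduct Q M) N').
  { rewrite is_model_reduct in HN, HM |- *. intros r Qr Hneg Hpos.
    destruct (classic (exists a, head_of r a /\ U a)) as [Hhead|Hhead].
    - pose proof (U_splits Qr Hhead) as HrU.
      destruct (HN r (conj Qr Hhead)) as [a [Ha Na]]; [| |exists a; unfold N'; auto].
      + intros B HB [MB _]. exact (Hneg B HB MB).
      + intros b Hb. destruct (Hpos b Hb) as [|[_ nUb]]; [assumption|].
        exfalso. apply nUb, HrU, body_atom_pos, Hb.
    - destruct (HM r Qr Hneg) as [a [Ha Ma]]; [intros b Hb; apply HN'M, Hpos, Hb|].
      exists a; split; [assumption|]. right; split; [assumption|].
      intros Ua. apply Hhead. exists a; split; assumption. }
  intros a [Ma Ua]. destruct (Hmin N' HN'M HN' a Ma) as [|[_ nUa]]; [assumption|].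
  contradiction.
Qed.

Lemma stable_model_gbot : stable_model Q M -> stable_model (gbot U Q) (restrict M U).
Proof. intros HM. split; [apply is_model_gbot, HM|apply minimal_gbot, HM]. Qed.

End Bottom.

Lemma stable_model_of_restrictions (Q : gprogram F Ps) (U : nat -> gset F Ps) (M : gset F Ps) :
  (forall n, gsplitting Q (U n)) ->
  (forall r, Q r -> exists n a, head_of r a /\ U n a) ->
  subset M (fun a => exists n, U n a) ->
  (forall n, stable_model (gbot (U n) Q) (restrict M (U n))) ->
  stable_model Q M.
Proof.
  intros Hsplit Hcover HMU Hstable. split.
  - apply is_model_reduct. intros r Qr Hneg Hpos.
    destruct (Hcover r Qr) as [n Hhead].
    pose proof (Hsplit n r Qr Hhead) as HrU.
    destruct (Hstable n) as [HMn _]. rewrite is_model_reduct in HMn.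
    destruct (HMn r (conj Qr Hhead)) as [a [Ha [Ma _]]]; [| |eauto].
    + intros B HB [MB _]. exact (Hneg B HB MB).
    + intros b Hb. split; [apply Hpos|apply HrU, body_atom_pos]; assumption.
  - intros N HNM HN a Ma. destruct (HMU a Ma) as [n Una].
    destruct (Hstable n) as [_ Hmin].
    refine (proj1 (Hmin (restrict N (U n)) _ _ a (conj Ma Una))).
    + intros b [Nb Ub]. split; [apply HNM|]; assumption.
    + rewrite is_model_reduct in HN |- *. intros r [Qr Hhead] Hneg Hpos.
      pose proof (Hsplit n r Qr Hhead) as HrU.
      destruct (HN r Qr) as [b [Hb Nb]].
      * intros B HB MB. apply (Hneg B HB). split; [|apply HrU, body_atom_neg]; assumption.
      * intros b Hb. apply Hpos, Hb.
      * exists b. repeat split; [assumption..|]. apply HrU; left; assumption.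
Qed.

Variable ar : F -> nat.

Lemma ground_rule_head_atom (P : program F Ps) r :
  Ground ar P r -> exists a, head_of r a /\ atoms (Ground ar P) a.
Proof.
  intros Gr. pose proof Gr as [r0 [s [_ [_ ->]]]].
  destruct (rhead r0) as [|a0 t] eqn:E; [destruct (rhead_ne r0 E)|].
  assert (Ha : head_of (rsubst s r0) (asubst s a0)) by (unfold head_of; simpl; rewrite E; now left).
  exists (asubst s a0); split; [|exists (rsubst s r0); split; [|left]]; assumption.
Qed.

Lemma smooth_finite (U : nat -> gset F Ps) : smooth_omega U -> forall n, finite_set (U n).
Proof.
  intros [H0 HS] n. induction n as [|n [l Hl]]; [exact H0|].
  destruct (HS n) as [d Hd]. exists (l ++ d); intros a Ua. apply in_or_app.
  destruct (classic (U n a)); [left; auto|right; apply Hd; auto].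
Qed.

End Splitting.

Theorem corollary4p2 (Fsym : Type) (ar : Fsym -> nat) (Psym : Type)
  (P : program Fsym Psym) (U : nat -> gset Fsym Psym) :
  splitting_sequence_omega ar P U -> smooth_omega U ->
  (consistent ar P <-> forall n, consistent_ground (bot ar (U n) P)).
Proof.
  intros [Hsplit [Hmono Hcover]] Hsmooth. split.
  - intros [M HM] n. exists (restrict M (U n)). exact (stable_model_gbot (Hsplit n) HM).
  - intros Hbots. destruct (choice _ Hbots) as [M HM].
    destruct (@coherent_restrictions _ U (smooth_finite Hsmooth) Hmono M) as [X HX].
    assert (HXU : forall n a, X n a -> U n a).
    { intros n a. destruct (proj1 (HX n) 0) as [m [_ <-]]. intros [_ Ua]; exact Ua. }
    exists (fun a => exists n, X n a).
    apply (@stable_model_of_restrictions _ _ (Ground ar P) U); [exact Hsplit| | |].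
    + intros r Gr. destruct (ground_rule_head_atom Gr) as [a [Ha Aa]].
      destruct (proj2 (Hcover a) Aa) as [n Una]. eauto.
    + intros a [n Xna]. eauto.
    + intros n. rewrite (@restrict_union _ U Hmono X HXU (fun k => proj2 (HX k))).
      destruct (proj1 (HX n) n) as [m [Hnm <-]].
      rewrite <- (gbot_gbot (Ground ar P) (Hmono n m Hnm)).
      exact (stable_model_gbot (gsplitting_gbot (V := U m) (Hsplit n)) (HM m)).
Qed.
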